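(* Let $L$ be a distributive lattice and $\mathbf x,\mathbf y\in L^n$. The following are equivalent: (i) $\mathbf x$ and $\mathbf y$ are g-comonotone; (ii) $\mathbf x$ and $\mathbf y$ are dually g-comonotone; (iii) $\bigwedge_{i\in I}(x_i\vee y_i)=\bigwedge_{i\in I}x_i\vee\bigwedge_{i\in I}y_i$ for each non-empty subset $I\subseteq\{1,\dots,n\}$; (iv) $\bigvee_{i\in I}(x_i\wedge y_i)=\bigvee_{i\in I}x_i\wedge\bigvee_{i\in I}y_i$ for each non-empty subset $I\subseteq\{1,\dots,n\}$.
   Context: $\mathbf x,\mathbf y\in L^n$ are g-comonotone if for every pair $i,j\in\{1,\dots,n\}$: $(x_i\vee y_i)\wedge(x_j\vee y_j)=(x_i\wedge x_j)\vee(y_i\wedge y_j)$. They are dually g-comonotone if for every pair $i,j$: $(x_i\wedge y_i)\vee(x_j\wedge y_j)=(x_i\vee x_j)\wedge(y_i\vee y_j)$. *)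

From HB Require Import structures.
From mathcomp Require Import all_boot all_order.
Set Implicit Arguments. Unset Strict Implicit. Unset Printing Implicit Defensive.
Import Order.TTheory.
Local Open Scope order_scope.

(* Vectors of L^n are functions 'I_n -> L (indices 0..n-1 instead of 1..n). *)

Definition g_comonotone (d : Order.disp_t) (L : latticeType d) (n : nat)
  (x y : 'I_n -> L) : Prop :=
  forall i j : 'I_n,
    (x i `|` y i) `&` (x j `|` y j) = (x i `&` x j) `|` (y i `&` y j).

Definition dually_g_comonotone (d : Order.disp_t) (L : latticeType d) (n : nat)
  (x y : 'I_n -> L) : Prop :=
  forall i j : 'I_n,
    (x i `&` y i) `|` (x j `&` y j) = (x i `|` x j) `&` (y i `|` y j).

(* Meet / join of f over a NON-EMPTY set I, given a witness i0 \in I.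
   Since meet/join are idempotent, using f i0 as the seed of the fold gives
   exactly the meet/join of {f i | i in I}, independently of i0 \in I. *)
Definition meet_ne (d : Order.disp_t) (L : latticeType d) (n : nat)
  (I : {set 'I_n}) (i0 : 'I_n) (f : 'I_n -> L) : L :=
  \big[Order.meet/f i0]_(i in I) f i.

Definition join_ne (d : Order.disp_t) (L : latticeType d) (n : nat)
  (I : {set 'I_n}) (i0 : 'I_n) (f : 'I_n -> L) : L :=
  \big[Order.join/f i0]_(i in I) f i.

From HB Require Import structures.
From mathcomp Require Import all_boot all_order.
Import Order.TTheory.
Local Open Scope order_scope.

(* Both g-comonotonicity and its dual are equivalent to the crossing
   inequalities x_i /\ y_j <= x_j \/ y_i for all i, j, which are invariant
   under order duality.  The crossing inequalities between a pair
   (a, b) and the pairs (x_i, y_i) survive taking meets over i, and for two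
   crossing pairs distributivity gives (a \/ b) /\ (a' \/ b') = (a /\ a') \/ (b /\ b');
   induction over I then yields (iii), and (iv) is (iii) in the dual lattice. *)

Section DistrLattice.
Context {disp : Order.disp_t} {L : distrLatticeType disp}.
Implicit Types a b c e : L.

Lemma leI_joinI a b c e :
  a `&` b <= c `|` e -> a `&` b <= (a `&` c) `|` (b `&` e).
Proof.
move=> le_ab; rewrite -(meet_l le_ab) meetUr.
by apply: leU2; rewrite lexI leIr andbT; apply: leIxl; [exact: leIl | exact: leIr].
Qed.

Lemma meetUU_cross a b a' b' :
  a `&` b' <= a' `|` b -> a' `&` b <= a `|` b' ->
  (a `|` b) `&` (a' `|` b') = (a `&` a') `|` (b `&` b').
Proof.
move=> le_ab' le_a'b; apply/le_anti; rewrite leUx !leI2 ?leUl ?leUr // andbT.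
rewrite meetUl !meetUr !leUx leUl leUr /= !andbT; apply/andP; split.
  by rewrite [b `&` b']meetC; exact: leI_joinI le_ab'.
by rewrite meetC [a `&` a']meetC; exact: leI_joinI le_a'b.
Qed.

Lemma meetI_cross a b a1 b1 a2 b2 :
  a `&` b1 <= a1 `|` b -> a `&` b2 <= a2 `|` b ->
  a `&` (b1 `&` b2) <= (a1 `&` a2) `|` b.
Proof.
move=> le1 le2; rewrite joinIl lexI.
by rewrite (le_trans _ le1) ?(le_trans _ le2) // leI2 // ?leIl ?leIr.
Qed.

Context {T : Type}.
Implicit Types x y : T -> L.

Definition crossed x y := forall i j, x i `&` y j <= x j `|` y i.

Lemma crossedC x y : crossed x y -> crossed y x.
Proof. by move=> cxy i j; rewrite meetC joinC. Qed.

Lemma big_meet_cross x y (s : seq T) (P : pred T) k j : crossed x y ->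
  x j `&` \big[Order.meet/y k]_(i <- s | P i) y i
    <= \big[Order.meet/x k]_(i <- s | P i) x i `|` y j.
Proof.
move=> cxy; elim/big_rec2: _ => [|i B A _]; first exact: cxy.
exact: meetI_cross.
Qed.

Lemma big_meet_join_cross x y (s : seq T) (P : pred T) k : crossed x y ->
  \big[Order.meet/(x k `|` y k)]_(i <- s | P i) (x i `|` y i)
    = \big[Order.meet/x k]_(i <- s | P i) x i
      `|` \big[Order.meet/y k]_(i <- s | P i) y i.
Proof.
move=> cxy; elim: s => [|j s IH]; rewrite ?big_nil // !big_cons.
case: ifP => // _; rewrite IH meetUU_cross //; first exact: big_meet_cross.
by rewrite [_ `&` y j]meetC [x j `|` _]joinC; apply: big_meet_cross; apply: crossedC.
Qed.

End DistrLattice.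

Section NonemptyMeet.
Context {disp : Order.disp_t} {L : latticeType disp} {n : nat}.
Implicit Types (I : {set 'I_n}) (f : 'I_n -> L).

Lemma lex_meet_ne {I i0} f (z : L) : i0 \in I ->
  z <= meet_ne I i0 f <-> forall i, i \in I -> z <= f i.
Proof.
move=> Ii0; split=> [le_z i Ii | le_zf].
  by apply: le_trans le_z _; rewrite /meet_ne (bigD1 i) //= leIl.
rewrite /meet_ne; elim/big_ind: _ => [||i]; last exact: le_zf.
- exact: le_zf.
- by move=> u v le_zu le_zv; rewrite lexI le_zu le_zv.
Qed.

Lemma meet_ne_set2 i j f : meet_ne [set i; j] i f = f i `&` f j.
Proof.
have Ii := set21 i j; apply/le_anti/andP; split.
  have /(lex_meet_ne f _ Ii) le_f := lexx (meet_ne [set i; j] i f).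
  by rewrite lexI !le_f ?set21 ?set22.
by apply/(lex_meet_ne f _ Ii) => l /set2P[]->; rewrite ?leIl ?leIr.
Qed.

End NonemptyMeet.

Section Comonotone.
Context {disp : Order.disp_t} {L : distrLatticeType disp} {n : nat}.
Variables x y : 'I_n -> L.

Lemma g_comonotoneP : g_comonotone x y <-> crossed x y.
Proof.
split=> [gc i j | cxy i j]; last exact: meetUU_cross.
apply: (@le_trans _ _ ((x i `|` y i) `&` (x j `|` y j))).
  by rewrite leI2 ?leUl ?leUr.
by rewrite gc leU2 ?leIl ?leIr.
Qed.

Lemma crossed_dual : @crossed _ L^d _ x y <-> crossed x y.
Proof. by split=> cxy i j; apply: cxy j i. Qed.

Lemma meet_ne_joinP :
  (forall (I : {set 'I_n}) i0, i0 \in I ->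
     meet_ne I i0 (fun i => x i `|` y i) = meet_ne I i0 x `|` meet_ne I i0 y)
  <-> crossed x y.
Proof.
split=> [meetU | cxy I i0 _]; last exact: big_meet_join_cross.
apply/g_comonotoneP => i j.
by have := meetU [set i; j] i (set21 i j); rewrite !meet_ne_set2.
Qed.

End Comonotone.

Section DualComonotone.
Context {disp : Order.disp_t} {L : distrLatticeType disp} {n : nat}.
Variables x y : 'I_n -> L.

Lemma dually_g_comonotoneP : dually_g_comonotone x y <-> crossed x y.
Proof. exact: iff_trans (g_comonotoneP (L := L^d) x y) (crossed_dual x y). Qed.

Lemma join_ne_meetP :
  (forall (I : {set 'I_n}) i0, i0 \in I ->
     join_ne I i0 (fun i => x i `&` y i) = join_ne I i0 x `&` join_ne I i0 y)
  <-> crossed x y.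
Proof. exact: iff_trans (meet_ne_joinP (L := L^d) x y) (crossed_dual x y). Qed.

End DualComonotone.

Theorem theorem2 (d : Order.disp_t) (L : distrLatticeType d) (n : nat)
  (x y : 'I_n -> L) :
  [/\ (g_comonotone x y <-> dually_g_comonotone x y),
      (g_comonotone x y <->
        forall (I : {set 'I_n}) (i0 : 'I_n), i0 \in I ->
          meet_ne I i0 (fun i => x i `|` y i)
          = meet_ne I i0 x `|` meet_ne I i0 y)
    & (g_comonotone x y <->
        forall (I : {set 'I_n}) (i0 : 'I_n), i0 \in I ->
          join_ne I i0 (fun i => x i `&` y i)
          = join_ne I i0 x `&` join_ne I i0 y)].
Proof.
split; apply: (iff_trans (g_comonotoneP x y)); apply: iff_sym.
- exact: dually_g_comonotoneP.
- exact: meet_ne_joinP.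
- exact: join_ne_meetP.
Qed.
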